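(* In the setting of the context, let $(\sigma_t,\sigma'_t)_{t\ge0}$ be the monotone coupling started at $(\sigma,\sigma')$. Then for all $t\ge0$, \[ \mathbb E\sum_{i=1}^ma_i\,\mathrm{dist}(\sigma_t^{(i)},\sigma_t'^{(i)})\le\rho_n^t\sum_{i=1}^ma_i\,\mathrm{dist}(\sigma^{(i)},\sigma'^{(i)}), \] and, for each $1\le i\le m$, $\mathbb E\,\mathrm{dist}(\sigma_t^{(i)},\sigma_t'^{(i)})\le n\sqrt{p_i}\,\rho_n^t$.
   Context: Fix $m\ge1$, proportions $p_1,\dots,p_m>0$ with $\sum_ip_i=1$, a symmetric matrix $\mathbf K=(k_{ij})$ with all $k_{ij}>0$, and $\beta\ge0$; $n$ is a positive integer with $np_i\in\mathbb N$. The vertex set $V=\{1,\dots,n\}$ is partitioned into blocks $G_1,\dots,G_m$ with $|G_i|=np_i$; for $v\in G_i,w\in G_j$ put $K(v,w)=k_{ij}/n$. For $\sigma\in\Omega=\{-1,+1\}^V$ let $S^v(\sigma)=\sum_{w\ne v}K(v,w)\sigma(w)$ and $r_+(s)=\frac{1+\tanh(\beta s)}2$. The monotone coupling is the grand coupling of Glauber dynamics in which at each step a vertex $I$ uniform on $V$ and an independent $U$ uniform on $[0,1]$ are drawn (shared by all chains), and each chain in state $\sigma$ sets the spin at $I$ to $+1$ if $U\le r_+(S^I(\sigma))$ and to $-1$ otherwise. $\mathrm{dist}(\sigma^{(i)},\sigma'^{(i)})$ is the number of vertices of $G_i$ at which $\sigma,\sigma'$ differ. Let $\mathbf B=(p_ik_{ij})$,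 $\mathbf Q_n=(1-\frac1n)\mathbf I_m+\frac\beta n\mathbf B$, $\rho_n$ its largest (Perron) eigenvalue and $\mathbf a=(a_1,\dots,a_m)^\top>0$ its left Perron eigenvector normalized by $\|\mathbf a\|_1=1$. *)

From HB Require Import structures.
From mathcomp Require Import all_boot all_order all_algebra.
From mathcomp Require Import all_classical all_reals all_analysis.
Set Implicit Arguments. Unset Strict Implicit. Unset Printing Implicit Defensive.
Import Order.TTheory GRing.Theory Num.Theory.
Import numFieldNormedType.Exports.
Local Open Scope classical_set_scope.
Local Open Scope ring_scope.

Section Glauber.
Variables (R : realType) (m n : nat).
(* blk v = index i of the block G_i containing vertex v *)
Variable blk : 'I_n -> 'I_m.
Variable k : 'M[R]_m.
Variable beta : R.

Definition config := {ffun 'I_n -> bool}.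
Definition spin (b : bool) : R := if b then 1 else -1.

Definition tanhR (x : R) : R := (expR x - expR (- x)) / (expR x + expR (- x)).
Definition rplus (s : R) : R := (1 + tanhR (beta * s)) / 2.

Definition Kvw (v w : 'I_n) : R := k (blk v) (blk w) / n%:R.

Definition Sfield (v : 'I_n) (sg : config) : R :=
  \sum_(w < n | w != v) Kvw v w * spin (sg w).

Definition upd (sg : config) (v : 'I_n) (u : R) : config :=
  [ffun w => if w == v then (u <= rplus (Sfield v sg)) else sg w].

(* E_(sg,sg') f(sg_t, sg'_t) for the monotone coupling: at each step a
   uniform vertex I and an independent uniform U on [0,1], shared by both
   chains (Markov backward recursion). *)
Fixpoint Ecoup (t : nat) (f : config * config -> R) (x : config * config) : R :=
  match t with
  | 0 => f x
  | t'.+1 => n%:R^-1 * \sum_(v < n)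
       (\int[@lebesgue_measure R]_(u in `[0, 1]) Ecoup t' f (upd x.1 v u, upd x.2 v u))
  end.

Definition dist (i : 'I_m) (sg sg' : config) : R :=
  #|[set v : 'I_n | (blk v == i) && (sg v != sg' v)]|%:R.

Variable p : 'I_m -> R.
Definition Bmx : 'M[R]_m := \matrix_(i, j) (p i * k i j).
Definition Qmx : 'M[R]_m := (1 - n%:R^-1) *: 1%:M + (beta / n%:R) *: Bmx.

End Glauber.
Arguments dist {R m n} blk i sg sg'.

From HB Require Import structures.
From mathcomp Require Import all_boot all_order all_algebra.
From mathcomp Require Import all_classical all_reals all_analysis.
From mathcomp Require Import measurable_realfun.
From mathcomp.algebra_tactics Require Import ring lra.
Set Implicit Arguments.
Unset Strict Implicit.
Unset Printing Implicit Defensive.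

Import Order.TTheory GRing.Theory Num.Theory.
Local Open Scope ring_scope.

(* Under the monotone coupling both chains refresh the chosen vertex I with the
   same U, so afterwards they disagree at I exactly when U lies between the two
   thresholds r_+(S^I sg) and r_+(S^I sg').  Since tanh is 1-Lipschitz, r_+ is
   beta/2-Lipschitz, and |S^I sg - S^I sg'| <= (2/n) sum_j k_(blk I) j dist_j;
   averaging over I shows that one step maps the vector d of block distances to
   at most Q_n d, entrywise in expectation.  Iterating, E (c . d_t) <= (c Q_n^t) . d_0
   for every c >= 0, which for c = a is rho_n^t (a . d_0).  For c = e_i we use
   dist_j <= n p_j and the symmetry of Q_n diag(p): by Cauchy-Schwarz against the
   positive eigenvector a, the weighted norm sum_j p_j w_j^2 shrinks by rho_n^2
   under w |-> w Q_n, whence sum_j (e_i Q_n^t)_j p_j <= sqrt(p_i) rho_n^t. *)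

Section TanhLipschitz.
Variable R : realType.

Let th (x : R) := 1 - 2 * (expR x * expR x + 1)^-1.
Let dth (x : R) := 4 * (expR x * expR x) / (expR x * expR x + 1) ^+ 2.

Let tanhRE (x : R) : tanhR x = th x.
Proof.
rewrite /tanhR /th expRN; have ex_gt0 := expR_gt0 x.
by field; rewrite !lt0r_neq0 //; nra.
Qed.

Let th_derive (x : R) : is_derive x (1 : R) th (dth x).
Proof.
have ex_gt0 := expR_gt0 x.
have den_neq0 : expR x * expR x + 1 != 0 by rewrite lt0r_neq0 //; nra.
have scaleE (c d : R) : c *: d = c * d by [].
by apply: trigger_derive; rewrite /dth /= !scaleE; field.
Qed.

Let dth_le1 (x : R) : 0 <= dth x <= 1.
Proof.
rewrite /dth; have ex_gt0 := expR_gt0 x.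
set e := expR x * expR x; have e_gt0 : 0 < e by rewrite mulr_gt0.
have den_gt0 : 0 < (e + 1) ^+ 2 by rewrite exprn_gt0 // addr_gt0.
apply/andP; split; first by apply: divr_ge0; [apply: mulr_ge0 | ]; apply: ltW.
rewrite ler_pdivrMr // mul1r.
have -> : (e + 1) ^+ 2 = 4 * e + (e - 1) ^+ 2 by ring.
by rewrite lerDl sqr_ge0.
Qed.

Lemma tanhR_lipschitz (x y : R) : `|tanhR x - tanhR y| <= `|x - y|.
Proof.
wlog yx : x y / y <= x.
  move=> Hwlog; have [|/ltW xy] := leP y x; first exact: Hwlog.
  by rewrite distrC [`|x - y|]distrC Hwlog.
have th_derivable z : derivable th z 1 by case: (th_derive z).
rewrite !tanhRE; have [c _ ->] := MVT_segment yx (fun z _ => th_derive z)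
  (derivable_within_continuous (fun z _ => th_derivable z)).
have /andP[dc_ge0 dc_le1] := dth_le1 c.
have xy_ge0 : 0 <= x - y by rewrite subr_ge0.
by rewrite normrM !ger0_norm // ler_piMl.
Qed.

Lemma rplus_lipschitz (beta s1 s2 : R) : 0 <= beta ->
  `|rplus beta s1 - rplus beta s2| <= beta / 2 * `|s1 - s2|.
Proof.
move=> beta_ge0; rewrite /rplus -mulrBl opprD addrACA subrr add0r normrM.
have := tanhR_lipschitz (beta * s1) (beta * s2).
rewrite -mulrBr normrM (ger0_norm beta_ge0) => lip.
by rewrite [`|2^-1|]ger0_norm ?invr_ge0 // mulrAC ler_wpM2r ?invr_ge0.
Qed.

End TanhLipschitz.

Lemma CauchySchwarz_weighted (R : realFieldType) (m : nat) (q a w : 'I_m -> R) :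
  (forall i, 0 <= q i) -> (forall i, 0 < a i) ->
  (\sum_i q i * w i) ^+ 2 <= (\sum_i q i * a i) * (\sum_i q i * w i ^+ 2 / a i).
Proof.
move=> q_ge0 a_gt0.
set A := \sum_i q i * a i; set B := \sum_i q i * w i.
set C := \sum_i q i * w i ^+ 2 / a i.
have qa_ge0 i : 0 <= q i * a i by rewrite mulr_ge0 ?(ltW (a_gt0 i)).
have [A0|A_neq0] := eqVneq A 0.
  have q0 i : q i = 0.
    have /eqP := @psumr_eq0P _ _ _ _ (fun j _ => qa_ge0 j) A0 i isT.
    by rewrite mulf_eq0 (gt_eqF (a_gt0 i)) orbF => /eqP.
  rewrite /B big1 => [|i _]; last by rewrite q0 mul0r.
  by rewrite A0 mul0r expr0n.
have A_gt0 : 0 < A by rewrite lt_def A_neq0 sumr_ge0.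
have : 0 <= \sum_i q i * a i * (w i / a i - B / A) ^+ 2.
  by apply: sumr_ge0 => i _; rewrite mulr_ge0 ?sqr_ge0.
have -> : \sum_i q i * a i * (w i / a i - B / A) ^+ 2 = C - B ^+ 2 / A.
  rewrite (eq_bigr (fun i => q i * w i ^+ 2 / a i - 2 * (B / A) * (q i * w i)
                             + (B / A) ^+ 2 * (q i * a i))); last first.
    by move=> i _; field; rewrite A_neq0 (gt_eqF (a_gt0 i)).
  by rewrite big_split sumrB /= -!mulr_sumr -/A -/B -/C; field.
by rewrite subr_ge0 ler_pdivrMr // mulrC.
Qed.

Section WeightedContraction.
Variables (R : rcfType) (m : nat) (Q : 'M[R]_m) (p : 'I_m -> R) (rho : R).
Variable a : 'rV[R]_m.
Hypothesis Q_ge0 : forall i j, 0 <= Q i j.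
Hypothesis p_ge0 : forall i, 0 <= p i.
Hypothesis a_gt0 : forall i, 0 < a 0 i.
Hypothesis aQ : a *m Q = rho *: a.
Hypothesis Qp_sym : forall i j, Q i j * p j = Q j i * p i.

Definition wsqnorm (w : 'rV[R]_m) : R := \sum_j p j * w 0 j ^+ 2.

Lemma sum_Q_eigvec j : \sum_i Q i j * a 0 i = rho * a 0 j.
Proof.
have := congr1 (fun M : 'rV_m => M 0 j) aQ; rewrite !mxE => <-.
by apply: eq_bigr => i _; rewrite mulrC.
Qed.

Lemma rho_ge0 (i : 'I_m) : 0 <= rho.
Proof.
have : 0 <= \sum_j Q j i * a 0 j.
  by apply: sumr_ge0 => j _; rewrite mulr_ge0 ?(ltW (a_gt0 j)).
by rewrite sum_Q_eigvec pmulr_lge0.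
Qed.

Lemma wsqnorm_mulmx w : wsqnorm (w *m Q) <= rho ^+ 2 * wsqnorm w.
Proof.
rewrite /wsqnorm; under eq_bigr do rewrite mxE.
apply: (@le_trans _ _
    (\sum_j p j * ((rho * a 0 j) * \sum_i Q i j * w 0 i ^+ 2 / a 0 i))).
  apply: ler_sum => j _; rewrite ler_wpM2l // -sum_Q_eigvec.
  under eq_bigr do rewrite mulrC; exact: CauchySchwarz_weighted.
under eq_bigr do rewrite !mulr_sumr.
rewrite exchange_big mulr_sumr le_eqVlt; apply/orP; left; apply/eqP/eq_bigr => i _.
have ai_neq0 : a 0 i != 0 := lt0r_neq0 (a_gt0 i).
transitivity (rho * w 0 i ^+ 2 / a 0 i * \sum_j Q j i * a 0 j * p i).
  rewrite mulr_sumr; apply: eq_bigr => j _; rewrite [Q j i * _ * _]mulrAC -Qp_sym.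
  by field.
by rewrite -mulr_suml sum_Q_eigvec; field.
Qed.

Lemma wsqnorm_iter t w : wsqnorm (iter t (mulmxr Q) w) <= rho ^+ (2 * t) * wsqnorm w.
Proof.
elim: t => [|t IH]; first by rewrite mul1r.
rewrite iterS (le_trans (wsqnorm_mulmx _)) // mulnS exprD -mulrA ler_wpM2l //.
exact: exprn_even_ge0.
Qed.

Lemma iter_mulmxr_ge0 t (w : 'rV[R]_m) : (forall j, 0 <= w 0 j) ->
  forall j, 0 <= (iter t (mulmxr Q) w) 0 j.
Proof.
move=> w_ge0; elim: t => [|t IH] j //=.
by rewrite mxE sumr_ge0 // => i _; rewrite mulr_ge0.
Qed.

Lemma iter_mulmxr_eigen t : iter t (mulmxr Q) a = rho ^+ t *: a.
Proof.
elim: t => [|t IH]; first by rewrite scale1r.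
by rewrite iterS /= IH -scalemxAl aQ scalerA exprSr.
Qed.

Hypothesis p_sum1 : \sum_i p i = 1.

Lemma sum_iter_delta_le t i :
  \sum_j (iter t (mulmxr Q) (delta_mx 0 i : 'rV[R]_m)) 0 j * p j
  <= Num.sqrt (p i) * rho ^+ t.
Proof.
set w := iter t (mulmxr Q) (delta_mx 0 i : 'rV[R]_m); set S := \sum_j _.
have w_ge0 : forall j, 0 <= w 0 j by apply: iter_mulmxr_ge0 => j; rewrite mxE ler0n.
have S_ge0 : 0 <= S by rewrite sumr_ge0 // => j _; rewrite mulr_ge0.
have S2_le : S ^+ 2 <= wsqnorm w.
  have := CauchySchwarz_weighted (fun j => w 0 j) p_ge0 (fun _ : 'I_m => ltr01).
  have -> : \sum_j p j * 1 = 1 by under eq_bigr do rewrite mulr1.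
  have -> : \sum_j p j * w 0 j = S by apply: eq_bigr => j _; rewrite mulrC.
  by under [X in _ * X]eq_bigr do rewrite divr1; rewrite mul1r.
have wsqnorm_delta : wsqnorm (delta_mx 0 i : 'rV[R]_m) = p i.
  rewrite /wsqnorm (bigD1 i) //= big1 => [|j /negbTE ji]; rewrite mxE eqxx ?ji /=.
    by rewrite eqxx expr1n mulr1 addr0.
  by rewrite expr0n mulr0.
have rhs_ge0 : 0 <= Num.sqrt (p i) * rho ^+ t.
  by rewrite mulr_ge0 ?sqrtr_ge0 ?exprn_ge0 ?(rho_ge0 i).
rewrite -(ler_pXn2r (_ : 0 < 2)%N) ?nnegrE // exprMn sqr_sqrtr // -exprM mulnC mulrC.
by apply: le_trans S2_le _; rewrite -wsqnorm_delta wsqnorm_iter.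
Qed.

End WeightedContraction.

Section ThresholdIntegrals.
Local Open Scope classical_set_scope.
Variable R : realType.
Notation mu := (@lebesgue_measure R).

Lemma lebesgue_measure_itv01 : mu `[0, 1] = 1%:E.
Proof. by rewrite lebesgue_measure_itv /= lte_fin ltr01 oppr0 adde0. Qed.

Lemma integrable_threshold2 (G : bool -> bool -> R) (c1 c2 : R) :
  mu.-integrable `[0, 1] (EFin \o (fun u => G (u <= c1) (u <= c2))).
Proof.
apply: measurable_bounded_integrable.
- exact: measurable_itv.
- by rewrite [X in (X < _)%E]lebesgue_measure_itv01 ltry.
- apply: measurable_funS measurableT _ _ => //.
  have -> : (fun u => G (u <= c1) (u <= c2)) =
      (fun u => if u <= c1 then (if u <= c2 then G true true else G true false)
                else (if u <= c2 then G false true else G false false)).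
    by apply/funext => u; case: (u <= c1); case: (u <= c2).
  have le_c1_measurable : measurable_fun [set: R] (fun u : R => u <= c1).
    by apply: measurable_fun_ler => //; exact: measurable_cst.
  have le_c2_measurable : measurable_fun [set: R] (fun u : R => u <= c2).
    by apply: measurable_fun_ler => //; exact: measurable_cst.
  by apply: measurable_fun_ifT => //; apply: measurable_fun_ifT.
- rewrite /bounded_near; near=> M => u _ /=.
  apply: (@le_trans _ _
    (`|G true true| + `|G true false| + `|G false true| + `|G false false|)).
    have := normr_ge0 (G true true); have := normr_ge0 (G true false).
    have := normr_ge0 (G false true); have := normr_ge0 (G false false).
    by case: (u <= c1); case: (u <= c2) => /=; lra.
  by near: M; exact: nbhs_pinfty_ge.
Unshelve. all: end_near. Qed.

Lemma Rintegral_threshold_xor_le (c1 c2 : R) :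
  \int[mu]_(u in `[0, 1]) ((u <= c1) != (u <= c2))%:R <= `|c1 - c2|.
Proof.
wlog c12 : c1 c2 / c1 <= c2.
  move=> Hwlog; have [|/ltW c21] := leP c1 c2; first exact: Hwlog.
  by under eq_Rintegral do rewrite eq_sym; rewrite distrC Hwlog.
have -> : (fun u => ((u <= c1) != (u <= c2))%:R) = (\1_(`]c1, c2] : set R) : R -> R).
  apply/funext => u; rewrite indicE.
  have -> : (u \in `]c1, c2]) = (c1 < u <= c2) by apply/idP/idP; rewrite inE /= in_itv.
  by case: (leP u c1) => h1; case: (leP u c2) => h2 //=; lra.
rewrite /Rintegral integral_indic; [|exact: measurable_itv..].
have mu_le : (mu (`]c1, c2] `&` `[0%R, 1%R]) <= (c2 - c1)%:E)%E.
  apply: (@le_trans _ _ (mu `]c1, c2])).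
    by apply: le_measure; rewrite ?inE; [apply: measurableI; exact: measurable_itv
      | exact: measurable_itv | exact: subIsetl].
  by rewrite lebesgue_measure_itv /=; case: ltP => // _; rewrite lee_fin subr_ge0.
rewrite distrC ger0_norm ?subr_ge0 // -lee_fin fineK // ge0_fin_numE ?measure_ge0 //.
exact: le_lt_trans mu_le (ltry _).
Qed.

End ThresholdIntegrals.

Lemma natr_card_sum (R : pzSemiRingType) (T : finType) (P : {pred T}) :
  #|P|%:R = \sum_x (x \in P)%:R :> R.
Proof.
rewrite -sum1_card natr_sum big_mkcond /=.
by apply: eq_bigr => x _; case: (x \in P).
Qed.

Section MonotoneCoupling.
Local Open Scope classical_set_scope.
Variables (R : realType) (m n : nat) (blk : 'I_n -> 'I_m) (k : 'M[R]_m) (beta : R).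
Notation mu := (@lebesgue_measure R).
Notation cfg := (config n).

Definition coupled_upd (x : cfg * cfg) (v : 'I_n) (u : R) : cfg * cfg :=
  (upd blk k beta x.1 v u, upd blk k beta x.2 v u).

Definition coupled_step (g : cfg * cfg -> R) (x : cfg * cfg) : R :=
  n%:R^-1 * \sum_(v < n) \int[mu]_(u in `[0, 1]) g (coupled_upd x v u).

Lemma EcoupS t f x :
  Ecoup blk k beta t.+1 f x = coupled_step (Ecoup blk k beta t f) x.
Proof. by []. Qed.

Lemma integrable_coupled_upd g x v :
  mu.-integrable `[0, 1] (EFin \o (fun u => g (coupled_upd x v u))).
Proof.
exact: (@integrable_threshold2 R (fun b1 b2 =>
  g ([ffun w => if w == v then b1 else x.1 w], [ffun w => if w == v then b2 else x.2 w]))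
  (rplus beta (Sfield blk k v x.1)) (rplus beta (Sfield blk k v x.2))).
Qed.

Lemma coupled_step_le g h x :
  (forall y, g y <= h y) -> coupled_step g x <= coupled_step h x.
Proof.
move=> gh; rewrite /coupled_step ler_wpM2l ?invr_ge0 //; apply: ler_sum => v _.
by apply: le_Rintegral => //; exact: integrable_coupled_upd.
Qed.

Lemma Rintegral_coupled_upd_sum x v (I : Type) (r : seq I) (c : I -> R)
    (g : I -> cfg * cfg -> R) :
  \int[mu]_(u in `[0, 1]) (\sum_(i <- r) c i * g i (coupled_upd x v u))
  = \sum_(i <- r) c i * \int[mu]_(u in `[0, 1]) g i (coupled_upd x v u).
Proof.
elim: r => [|i r IH].
  by under eq_Rintegral do rewrite big_nil; rewrite big_nil Rintegral_cst ?mul0r.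
under eq_Rintegral do rewrite big_cons.
rewrite big_cons RintegralD //; last 2 first.
- exact: (integrable_coupled_upd (fun y => c i * g i y)).
- exact: (integrable_coupled_upd (fun y => \sum_(j <- r) c j * g j y)).
by rewrite IH RintegralZl //; exact: integrable_coupled_upd.
Qed.

Lemma coupled_step_sum x (I : Type) (r : seq I) (c : I -> R)
    (g : I -> cfg * cfg -> R) :
  coupled_step (fun y => \sum_(i <- r) c i * g i y) x
  = \sum_(i <- r) c i * coupled_step (g i) x.
Proof.
rewrite /coupled_step; under eq_bigr do rewrite Rintegral_coupled_upd_sum.
rewrite exchange_big mulr_sumr; apply: eq_bigr => i _.
by rewrite -mulr_sumr mulrCA.
Qed.

Lemma dist_sum i (s s' : cfg) :
  dist blk i s s' = \sum_w ((blk w == i) && (s w != s' w))%:R :> R.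
Proof.
rewrite /dist natr_card_sum; apply: eq_bigr => w _; congr (nat_of_bool _)%:R.
by apply/idP/idP => [/set_mem | /mem_set].
Qed.

Lemma dist_upd i (s s' : cfg) v u :
  dist blk i (upd blk k beta s v u) (upd blk k beta s' v u) =
  dist blk i s s' - ((blk v == i) && (s v != s' v))%:R
  + ((blk v == i) && ((u <= rplus beta (Sfield blk k v s))
                      != (u <= rplus beta (Sfield blk k v s'))))%:R :> R.
Proof.
rewrite !dist_sum (bigD1 v) //= [in RHS](bigD1 v) //= !ffunE eqxx.
rewrite (eq_bigr (fun w => ((blk w == i) && (s w != s' w))%:R)) => [|w /negbTE wv].
  by ring.
by rewrite !ffunE wv.
Qed.

Hypothesis k_ge0 : forall i j, 0 <= k i j.

Lemma Sfield_lipschitz v (s s' : cfg) :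
  `|Sfield blk k v s - Sfield blk k v s'| <=
    2 / n%:R * \sum_j k (blk v) j * dist blk j s s'.
Proof.
rewrite /Sfield -sumrB (le_trans (ler_norm_sum _ _ _)) //.
apply: (@le_trans _ _ (\sum_w Kvw blk k v w * (2 * (s w != s' w)%:R))).
  rewrite big_mkcond /=; apply: ler_sum => w _.
  have Kvw_ge0 : 0 <= Kvw blk k v w by rewrite divr_ge0.
  case: (w != v); last by rewrite !mulr_ge0.
  rewrite -mulrBr normrM ger0_norm // ler_wpM2l //.
  by rewrite /spin; case: (s w); case: (s' w); rewrite /= ?subrr ?normr0 ?mulr0 //
    ?opprK -?opprD ?normrN ger0_norm //; lra.
rewrite (partition_big blk predT) //= mulr_sumr le_eqVlt; apply/orP; left; apply/eqP.
apply: eq_bigr => j _; rewrite dist_sum big_mkcond /= !mulr_sumr.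
apply: eq_bigr => w _; rewrite /Kvw; case: eqP => [<-|_] /=; last by rewrite !mulr0.
by ring.
Qed.

Hypothesis beta_ge0 : 0 <= beta.

Lemma Rintegral_dist_upd_le i x v :
  \int[mu]_(u in `[0, 1]) dist blk i (coupled_upd x v u).1 (coupled_upd x v u).2
  <= dist blk i x.1 x.2 - ((blk v == i) && (x.1 v != x.2 v))%:R
     + (blk v == i)%:R * (beta / n%:R * \sum_j k i j * dist blk j x.1 x.2).
Proof.
under eq_Rintegral do rewrite dist_upd.
set c1 := rplus beta (Sfield blk k v x.1); set c2 := rplus beta (Sfield blk k v x.2).
set d := dist blk i x.1 x.2 - _.
rewrite RintegralD //; last 2 first.
- exact: (@integrable_threshold2 R (fun _ _ => d) c1 c2).
- exact: (@integrable_threshold2 R (fun b1 b2 => ((blk v == i) && (b1 != b2))%:R) c1 c2).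
rewrite Rintegral_cst // [X in fine X]lebesgue_measure_itv01 mulr1 lerD2l.
have [<-|_] := eqP; last by rewrite mul0r Rintegral_cst // mul0r.
rewrite mul1r (le_trans (Rintegral_threshold_xor_le c1 c2)) //.
rewrite (le_trans (rplus_lipschitz _ _ beta_ge0)) //.
rewrite (le_trans (ler_wpM2l _ (Sfield_lipschitz v x.1 x.2))) ?divr_ge0 //.
by rewrite !mulrA -[beta / 2 * 2]mulrA mulVf ?pnatr_eq0 // mulr1.
Qed.

Variable p : 'I_m -> R.
Hypothesis n_gt0 : (0 < n)%N.
Hypothesis card_blk : forall i, #|[set v | blk v == i]%SET|%:R = n%:R * p i.

Lemma QmxE i j :
  Qmx n k beta p i j = (1 - n%:R^-1) * (i == j)%:R + beta / n%:R * (p i * k i j).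
Proof. by rewrite !mxE. Qed.

Lemma coupled_step_dist_le i x :
  coupled_step (fun y => dist blk i y.1 y.2) x
  <= \sum_j Qmx n k beta p i j * dist blk j x.1 x.2.
Proof.
set X := beta / n%:R * \sum_j k i j * dist blk j x.1 x.2.
apply: (@le_trans _ _ (n%:R^-1 * \sum_(v < n) (dist blk i x.1 x.2
   - ((blk v == i) && (x.1 v != x.2 v))%:R + (blk v == i)%:R * X))).
  by rewrite ler_wpM2l ?invr_ge0 //; apply: ler_sum => v _; exact: Rintegral_dist_upd_le.
have block_size : \sum_(v < n) (blk v == i)%:R = n%:R * p i :> R.
  by rewrite -card_blk natr_card_sum; apply: eq_bigr => v _; rewrite inE.
rewrite big_split sumrB /= sumr_const card_ord -mulr_suml block_size -dist_sum.
under eq_bigr do rewrite QmxE mulrDl.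
rewrite big_split /= (bigD1 i) //= big1 => [|j /negbTE ji]; last first.
  by rewrite eq_sym ji mulr0 mul0r.
rewrite eqxx mulr1 addr0 /X.
have -> : \sum_j beta / n%:R * (p i * k i j) * dist blk j x.1 x.2
          = beta / n%:R * p i * \sum_j k i j * dist blk j x.1 x.2.
  by rewrite mulr_sumr; apply: eq_bigr => j _; ring.
have n_neq0 : n%:R != 0 :> R by rewrite pnatr_eq0 -lt0n.
by rewrite -mulr_natr le_eqVlt; apply/orP; left; apply/eqP; field.
Qed.

Lemma dist_le_block_size i (s s' : cfg) : dist blk i s s' <= n%:R * p i.
Proof.
rewrite dist_sum -card_blk natr_card_sum ler_sum // => w _.
by rewrite inE ler_nat; case: (blk w == i) => //=; exact: leq_b1.
Qed.

Lemma Qmx_reversible : k^T = k ->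
  forall i j, Qmx n k beta p i j * p j = Qmx n k beta p j i * p i.
Proof.
move=> k_sym i j; have k_ji : k j i = k i j by rewrite -[in LHS]k_sym mxE.
rewrite !QmxE k_ji [j == i]eq_sym.
by case: eqP => [->|_] //=; ring.
Qed.

Hypothesis p_ge0 : forall i, 0 <= p i.

Lemma Qmx_ge0 i j : 0 <= Qmx n k beta p i j.
Proof.
rewrite QmxE addr_ge0 ?mulr_ge0 ?divr_ge0 //.
by rewrite subr_ge0 invf_le1 ?ler1n ?ltr0n.
Qed.

Lemma Ecoup_dist_le t (c : 'rV[R]_m) x : (forall i, 0 <= c 0 i) ->
  Ecoup blk k beta t (fun y => \sum_i c 0 i * dist blk i y.1 y.2) x
  <= \sum_i (iter t (mulmxr (Qmx n k beta p)) c) 0 i * dist blk i x.1 x.2.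
Proof.
elim: t c x => [//|t IH] c x c_ge0.
rewrite EcoupS (le_trans (coupled_step_le _ (IH c ^~ c_ge0))) // coupled_step_sum.
have w_ge0 := iter_mulmxr_ge0 Qmx_ge0 t c_ge0.
apply: (@le_trans _ _ (\sum_i (iter t (mulmxr (Qmx n k beta p)) c) 0 i
    * \sum_j Qmx n k beta p i j * dist blk j x.1 x.2)).
  by apply: ler_sum => i _; rewrite ler_wpM2l // coupled_step_dist_le.
rewrite le_eqVlt; apply/orP; left; apply/eqP.
under eq_bigr do rewrite mulr_sumr; rewrite exchange_big /=; apply: eq_bigr => j _.
by rewrite /= mxE mulr_suml; apply: eq_bigr => i _; rewrite mulrA.
Qed.

End MonotoneCoupling.

Theorem lemma4p5 (R : realType) (m n : nat) (p : 'I_m -> R) (k : 'M[R]_m)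
  (beta : R) (blk : 'I_n -> 'I_m) (rho : R) (a : 'rV[R]_m) :
  (0 < m)%N -> (0 < n)%N ->
  (forall i, 0 < p i) -> \sum_i p i = 1 ->
  k^T = k -> (forall i j, 0 < k i j) -> 0 <= beta ->
  (forall i, #|[set v | blk v == i]|%:R = n%:R * p i) ->
  (* rho_n : the largest eigenvalue of Q_n *)
  eigenvalue (Qmx n k beta p) rho ->
  (forall lam, eigenvalue (Qmx n k beta p) lam -> lam <= rho) ->
  (* a : positive left eigenvector for rho, with ||a||_1 = 1 *)
  a *m Qmx n k beta p = rho *: a ->
  (forall i, 0 < a 0 i) -> \sum_i a 0 i = 1 ->
  forall (sg sg' : config n) (t : nat),
    Ecoup blk k beta t
      (fun x => \sum_i a 0 i * dist blk i x.1 x.2) (sg, sg')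
      <= rho ^+ t * \sum_i a 0 i * dist blk i sg sg'
    /\ (forall i, Ecoup blk k beta t (fun x => dist blk i x.1 x.2) (sg, sg')
                  <= n%:R * Num.sqrt (p i) * rho ^+ t).
Proof.
move=> _ n_gt0 p_gt0 p_sum1 k_sym k_gt0 beta_ge0 card_blk _ _ aQ a_gt0 _ sg sg' t.
have k_ge0 i j : 0 <= k i j := ltW (k_gt0 i j).
have p_ge0 i : 0 <= p i := ltW (p_gt0 i).
have Q_ge0 := Qmx_ge0 k_ge0 beta_ge0 n_gt0 p_ge0.
have Ecoup_le := Ecoup_dist_le k_ge0 beta_ge0 n_gt0 card_blk p_ge0 t.
split=> [|i].
  rewrite (le_trans (Ecoup_le a (sg, sg') (fun i => ltW (a_gt0 i)))) //.
  by rewrite (iter_mulmxr_eigen aQ) mulr_sumr; under eq_bigr do rewrite mxE -mulrA.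
set e_i : 'rV[R]_m := delta_mx 0 i.
have -> : (fun y : config n * config n => dist blk i y.1 y.2)
          = (fun y => \sum_j e_i 0 j * dist blk j y.1 y.2).
  apply: funext => y; rewrite (bigD1 i) //= big1 => [|j /negbTE ji]; rewrite mxE eqxx /=.
    by rewrite eqxx mul1r addr0.
  by rewrite ji mul0r.
have e_i_ge0 j : 0 <= e_i 0 j by rewrite mxE ler0n.
rewrite (le_trans (Ecoup_le e_i (sg, sg') e_i_ge0)) //.
have w_ge0 := iter_mulmxr_ge0 Q_ge0 t e_i_ge0.
apply: (@le_trans _ _ (n%:R * \sum_j (iter t (mulmxr (Qmx n k beta p)) e_i) 0 j * p j)).
  rewrite mulr_sumr ler_sum // => j _.
  by rewrite mulrCA ler_wpM2l // dist_le_block_size.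
rewrite -mulrA ler_wpM2l //.
exact: sum_iter_delta_le Q_ge0 p_ge0 a_gt0 aQ (Qmx_reversible n beta p k_sym) p_sum1 t i.
Qed.
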